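(* Let $(\Omega,\mathcal{F},\mathbb{P})$ be a probability space. The set $\mathbb{L}^0_+$ is locally convex for the $\mathbb{L}^0$-topology (every element has a neighbourhood base, for the relative $\mathbb{L}^0$-topology on $\mathbb{L}^0_+$, consisting of convex sets) if and only if the probability space is purely atomic. In this case, there exists a probability $\mathbb{Q}$ equivalent to $\mathbb{P}$ such that the $\mathbb{L}^0$-topology on $\mathbb{L}^0_+$ coincides with the $\mathbb{L}^1(\mathbb{Q})$-topology on $\mathbb{L}^0_+$ if and only if the probability space has only finitely many atoms (and then any $\mathbb{Q}$ equivalent to $\mathbb{P}$ works).
   Context: $\mathbb{L}^0$ is the space of (equivalence classes modulo $\mathbb{P}$-null sets of) real-valued random variables with the topology of convergence in probability, metrized by $(X,Y)\mapsto\mathbb{E}_{\mathbb{P}}[1\wedge|X-Y|]$; $\mathbb{L}^0_+$ are its nonnegative elements. *)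

From HB Require Import structures.
From mathcomp Require Import all_boot all_order all_algebra.
From mathcomp Require Import all_classical all_reals all_analysis.
Set Implicit Arguments. Unset Strict Implicit. Unset Printing Implicit Defensive.
Import Order.TTheory GRing.Theory Num.Theory.
Import numFieldNormedType.Exports.
Local Open Scope classical_set_scope.
Local Open Scope ring_scope.

Section L0.
Context {d : measure_display} {T : measurableType d} {R : realType}.

(* Elements of L^0_+ are represented by measurable real functions that are
   P-a.e. nonnegative; all notions below are invariant under P-a.e. equality. *)
Definition L0plus (P : probability T R) : set (T -> R) :=
  [set X : T -> R | measurable_fun setT X /\ {ae P, forall w, 0 <= X w}].

Definition dist0 (P : probability T R) (X Y : T -> R) : \bar R :=
  (\int[P]_(w in setT) (Num.min 1 `|X w - Y w|)%:E)%E.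

Definition dist1 (Q : probability T R) (X Y : T -> R) : \bar R :=
  (\int[Q]_(w in setT) (`|X w - Y w|)%:E)%E.

Definition nbhd0 (P : probability T R) (X : T -> R) (N : set (T -> R)) : Prop :=
  N `<=` L0plus P /\
  exists e : R, 0 < e /\
    [set Y | L0plus P Y /\ (dist0 P X Y < e%:E)%E] `<=` N.

Definition nbhd1 (P Q : probability T R) (X : T -> R) (N : set (T -> R)) : Prop :=
  N `<=` L0plus P /\
  exists e : R, 0 < e /\
    [set Y | L0plus P Y /\ (dist1 Q X Y < e%:E)%E] `<=` N.

Definition convex_set (C : set (T -> R)) : Prop :=
  forall X Y, C X -> C Y -> forall l : R, 0 <= l -> l <= 1 ->
    C (fun w => l * X w + (1 - l) * Y w).

Definition L0plus_locally_convex (P : probability T R) : Prop :=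
  forall X, L0plus P X -> forall N, nbhd0 P X N ->
    exists V, convex_set V /\ V `<=` N /\ nbhd0 P X V.

Definition atom (P : probability T R) (A : set T) : Prop :=
  measurable A /\ (0 < P A)%E /\
  forall B, measurable B -> B `<=` A -> P B = 0%E \/ P B = P A.

Definition purely_atomic (P : probability T R) : Prop :=
  forall A, measurable A -> (0 < P A)%E -> exists B, B `<=` A /\ atom P B.

(* finitely many atoms, atoms being identified up to P-null sets *)
Definition finitely_many_atoms (P : probability T R) : Prop :=
  exists (n : nat) (A : 'I_n -> set T), (forall i, atom P (A i)) /\
    forall B, atom P B -> exists i, P ((B `\` A i) `|` (A i `\` B)) = 0%E.

Definition equiv_prob (Q P : probability T R) : Prop :=
  forall A, measurable A -> (P A = 0%E <-> Q A = 0%E).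

Definition same_topology_L0plus (P Q : probability T R) : Prop :=
  forall X, L0plus P X -> forall N, nbhd0 P X N <-> nbhd1 P Q X N.

End L0.

(* If P is purely atomic, finitely many atoms carry all but e/2 of the mass,
   and an atom carries no set of positive but non-full measure, so a Y that is
   L0-close enough to X is uniformly (e/2)-close to X on each of these atoms.
   The Y with this property form a convex set, and they lie in the L0-ball of
   radius e around X.  Conversely, if A is an atomless part of P, cover most of
   A by finitely many sets B_1, ..., B_n of small measure: each n 1_{B_k} is
   L0-close to 0, but their average sum_k 1_{B_k} is at least 1 on most of A,
   so no convex neighbourhood of 0 fits in a small L0-ball.  With finitely many
   atoms, convergence in probability and in L1(Q) both mean uniform convergence
   on each atom.  With infinitely many, some atom B has P-mass below any given
   bound, and 1_B / Q(B) is L0-small but has L1(Q)-norm 1. *)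

From Pilot Require Import Defs.
From HB Require Import structures.
From mathcomp Require Import all_boot all_order all_algebra.
From mathcomp Require Import all_classical all_reals all_analysis.
From mathcomp Require Import ring lra.
From mathcomp Require Import measurable_realfun.
Set Implicit Arguments. Unset Strict Implicit. Unset Printing Implicit Defensive.
Import Order.TTheory GRing.Theory Num.Theory.
Import numFieldNormedType.Exports.
Local Open Scope classical_set_scope.
Local Open Scope ring_scope.

Section real_valued_probability.
Context {d : measure_display} {T : measurableType d} {R : realType}.
Variable mu : probability T R.
Local Notation p A := (fine (mu A)).
Implicit Types A B : set T.

Lemma fine_measure_ge0 A : 0 <= p A.
Proof. exact/fine_ge0/measure_ge0. Qed.

Lemma fine_measureK A : measurable A -> (p A)%:E = mu A.
Proof. by move=> mA; rewrite fineK// fin_num_measure. Qed.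

Lemma fine_probability_le1 A : measurable A -> p A <= 1.
Proof. by move=> mA; rewrite -lee_fin fine_measureK// probability_le1. Qed.

Lemma fine_probability_setT : p setT = 1.
Proof. by rewrite probability_setT. Qed.

Lemma fine_measure_eq0 A : measurable A -> mu A = 0%E <-> p A = 0.
Proof. by move=> mA; split => [->//|h]; rewrite -fine_measureK// h. Qed.

Lemma fine_measure_inj A B : measurable A -> measurable B ->
  p A = p B -> mu A = mu B.
Proof. by move=> mA mB AB; rewrite -(fine_measureK mA) -(fine_measureK mB) AB. Qed.

Lemma fine_measure_gt0 A : measurable A -> (0 < mu A)%E <-> 0 < p A.
Proof. by move=> mA; rewrite -[X in (_ < X)%E]fine_measureK// lte_fin. Qed.

Lemma le_fine_measure A B : measurable A -> measurable B -> A `<=` B ->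
  p A <= p B.
Proof.
move=> mA mB AB; rewrite -lee_fin !fine_measureK//.
by apply: le_measure; rewrite ?inE.
Qed.

Lemma fine_measureU A B : measurable A -> measurable B -> A `&` B = set0 ->
  p (A `|` B) = p A + p B.
Proof.
by move=> mA mB AB0; rewrite measureU// fineD// fin_num_measure.
Qed.

Lemma fine_measureU2 A B : measurable A -> measurable B ->
  p (A `|` B) <= p A + p B.
Proof.
move=> mA mB; rewrite -lee_fin fine_measureK ?EFinD ?fine_measureK//.
  exact: measureU2.
exact: measurableU.
Qed.

Lemma fine_measureD A B : measurable A -> measurable B ->
  p (A `\` B) = p A - p (A `&` B).
Proof.
move=> mA mB; rewrite (measureDI mu mA mB) fineD ?addrK//.
- exact/fin_num_measure/measurableD.
- exact/fin_num_measure/measurableI.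
Qed.

Lemma fine_probabilityC A : measurable A -> p (~` A) = 1 - p A.
Proof. by move=> mA; rewrite -setTD fine_measureD// setTI fine_probability_setT. Qed.

Lemma fine_measure_bigcup_le (F : (set T)^nat) (c : R) :
  (forall n, measurable (F n)) -> nondecreasing_seq F ->
  (forall n, p (F n) <= c) -> p (\bigcup_n F n) <= c.
Proof.
move=> mF ndF Fc.
have mD : measurable (\bigcup_n F n) := bigcup_measurable (fun n _ => mF n).
have cv := @nondecreasing_cvg_mu _ _ _ mu F mF mD ndF.
rewrite -lee_fin fine_measureK//; move/cvg_lim : (cv) => <- //.
apply: lime_le; first by apply/cvg_ex; eexists; exact: cv.
by apply: nearW => n /=; rewrite -[X in (X <= _)%E](fine_measureK (mF n)) lee_fin.
Qed.

End real_valued_probability.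

Lemma le0_of_lt_invS {R : realType} (x : R) :
  (forall n : nat, x < n.+1%:R^-1) -> x <= 0.
Proof.
move=> h; rewrite leNgt; apply/negP => x0.
have := h (Num.truncn x^-1); apply/negP; rewrite -leNgt.
by rewrite -[leRHS]invrK lef_pV2 ?posrE ?invr_gt0// ltW// truncnS_gt.
Qed.

Section exhaustion.
Context {d : measure_display} {T : measurableType d} {R : realType}.
Variables (mu : probability T R) (U : set (set T)).
Hypotheses (U0 : U set0) (UU : setU_closed U) (mU : forall V, U V -> measurable V).
Local Notation p A := (fine (mu A)).

Lemma has_sup_fine_measure : has_sup [set p V | V in U].
Proof.
split; first by exists (p set0), set0.
by exists 1 => _ [V UV <-]; exact/fine_probability_le1/mU.
Qed.

Lemma nondecreasing_sup_approx : exists F : (set T)^nat,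
  [/\ forall n, U (F n), nondecreasing_seq F &
      forall n, sup [set p V | V in U] < p (F n) + n.+1%:R^-1].
Proof.
have /choice[V hV] n : exists V, U V /\ sup [set p V | V in U] < p V + n.+1%:R^-1.
  have n0 : 0 < n.+1%:R^-1 :> R by rewrite invr_gt0.
  have [_ [W UW <-]] := sup_adherent n0 has_sup_fine_measure.
  by exists W; rewrite -ltrBlDr.
pose F n := \big[setU/set0]_(k < n.+1) V k.
have VF n : V n `<=` F n by rewrite /F big_ord_recr; exact: subsetUr.
have UF n : U (F n).
  elim: n => [|n IH]; first by rewrite /F big_ord1; exact: (hV 0%N).1.
  by rewrite /F big_ord_recr; apply: UU => //; exact: (hV n.+1).1.
exists F; split => //.
  apply/nondecreasing_seqP => n; apply/subsetPset.
  by rewrite /F [X in _ `<=` X]big_ord_recr; exact: subsetUl.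
move=> n; apply: (lt_le_trans (hV n).2); rewrite lerD2r; apply: le_fine_measure => //.
  exact/mU/(hV n).1.
exact: mU.
Qed.

(* The union D of an increasing sequence in U whose measures approach the
   supremum leaves a null part of A outside, by richness. *)
Lemma exhaustion (A : set T) : measurable A ->
  (forall C, measurable C -> C `<=` A -> (0 < mu C)%E ->
     exists2 V, U V & V `<=` C /\ (0 < mu V)%E) ->
  forall eps, 0 < eps -> exists2 V, U V & p A < p V + eps.
Proof.
move=> mA Urich eps eps0.
have [F [UF ndF Fs]] := nondecreasing_sup_approx.
have hs := has_sup_fine_measure.
have Fsup V : U V -> p V <= sup [set p V | V in U].
  by move=> UV; apply: sup_upper_bound => //; exists V.
pose D := \bigcup_n F n.
have mD : measurable D := bigcup_measurable (fun n _ => mU (UF n)).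
have Ds : p D <= sup [set p V | V in U].
  by apply: fine_measure_bigcup_le => // n; [exact: mU | exact: Fsup].
have AD0 : p (A `\` D) = 0.
  have mAD := measurableD mA mD.
  apply/eqP; rewrite eq_le fine_measure_ge0 andbT leNgt; apply/negP.
  move=> /(fine_measure_gt0 mu mAD) /(Urich _ mAD (@subDsetl _ _ _)) [W UW [WAD Wpos]].
  move/(fine_measure_gt0 mu (mU UW)) : Wpos; apply/negP; rewrite -leNgt.
  apply: le0_of_lt_invS => n.
  have FW : F n `&` W = set0.
    by apply/seteqP; split => // w [Fw /WAD [_]]; apply; exists n.
  have := Fsup _ (UU (UF n) UW); have := Fs n.
  rewrite (fine_measureU _ (mU (UF n)) (mU UW) FW).
  (* [lra] fails on the inverse of a natural-number cast. *)
  by move: (n.+1%:R^-1) => x; lra.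
have As : p A <= sup [set p V | V in U].
  have := fine_measureD mu mA mD; rewrite AD0.
  have := le_fine_measure mu (measurableI _ _ mA mD) mD (@subIsetr _ _ _); lra.
have [_ [V UV <-] ?] := sup_adherent eps0 hs.
by exists V => //; lra.
Qed.

End exhaustion.

Section finite_unions.
Context {d : measure_display} {T : measurableType d} {R : realType}.
Variable G : set (set T).

Definition finite_unions : set (set T) :=
  [set \big[setU/set0]_(B <- s) B | s in [set s : seq (set T) | {in s, forall B, G B}]].

Lemma finite_unions_set0 : finite_unions set0.
Proof. by exists [::]; rewrite ?big_nil. Qed.

Lemma finite_unions1 B : G B -> finite_unions B.
Proof.
by move=> GB; exists [:: B]; rewrite ?big_seq1// => C; rewrite inE => /eqP->.
Qed.

Lemma finite_unions_setU_closed : setU_closed finite_unions.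
Proof.
move=> _ _ [s1 hs1 <-] [s2 hs2 <-]; exists (s1 ++ s2); last by rewrite big_cat.
by move=> B; rewrite mem_cat => /orP[/hs1|/hs2].
Qed.

Lemma measurable_finite_unions : G `<=` measurable -> finite_unions `<=` measurable.
Proof.
by move=> GM _ [s hs <-]; rewrite big_seq; apply: bigsetU_measurable => B /hs /GM.
Qed.

Lemma finite_family_exhaustion (mu : probability T R) (A : set T) :
  measurable A -> G `<=` measurable ->
  (forall C, measurable C -> C `<=` A -> (0 < mu C)%E ->
     exists2 B, G B & B `<=` C /\ (0 < mu B)%E) ->
  forall eps, 0 < eps -> exists2 s, {in s, forall B, G B} &
    fine (mu A) < fine (mu (\big[setU/set0]_(B <- s) B)) + eps.
Proof.
move=> mA GM Grich eps eps0.
have Urich C : measurable C -> C `<=` A -> (0 < mu C)%E ->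
    exists2 V, finite_unions V & V `<=` C /\ (0 < mu V)%E.
  move=> mC CA /(Grich _ mC CA)[B GB BC].
  by exists B => //; exact: finite_unions1.
have [_ [s hs <-]] := exhaustion finite_unions_set0 finite_unions_setU_closed
  (measurable_finite_unions GM) mA Urich eps0.
by exists s.
Qed.

End finite_unions.

Section atoms.
Context {d : measure_display} {T : measurableType d} {R : realType}.
Implicit Types (P Q : probability T R) (B C S : set T).

Lemma atom_setI P B S : atom P B -> measurable S ->
  P (B `&` S) = 0%E \/ P (B `&` S) = P B.
Proof. by move=> [mB [_ hB]] mS; apply: hB; [exact: measurableI|exact: subIsetl]. Qed.

Lemma atom_setI_or_symdiff P B C : atom P B -> atom P C ->
  P (B `&` C) = 0%E \/ P ((B `\` C) `|` (C `\` B)) = 0%E.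
Proof.
move=> aB aC; have [mB mC] := (aB.1, aC.1).
have [|BC] := atom_setI aB mC; first by left.
have [|CB] := atom_setI aC mB; first by rewrite setIC; left.
right; apply/fine_measure_eq0; first by apply: measurableU; exact: measurableD.
apply/eqP; rewrite eq_le fine_measure_ge0 andbT.
apply: le_trans (fine_measureU2 _ (measurableD mB mC) (measurableD mC mB)) _.
by rewrite !fine_measureD// BC CB !subrr addr0.
Qed.

Lemma equiv_prob_sym P Q : equiv_prob Q P -> equiv_prob P Q.
Proof. by move=> hQ A mA; apply: iff_sym; exact: hQ. Qed.

Lemma equiv_prob_ae P Q (p : T -> Prop) :
  equiv_prob Q P -> {ae P, forall w, p w} -> {ae Q, forall w, p w}.
Proof. by move=> hQ [N [mN /(hQ N mN) QN pN]]; exists N. Qed.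

Lemma equiv_prob_atom P Q B : equiv_prob Q P -> atom P B -> atom Q B.
Proof.
move=> hQ [mB [Bpos hB]]; split => //; split.
  rewrite lt0e measure_ge0 andbT; apply/eqP => /(hQ _ mB) B0.
  by rewrite B0 ltxx in Bpos.
move=> C mC CB; have [/(hQ _ mC)|PC] := hB C mC CB; first by left.
right; have BC : B `&` C = C by apply/setIidr.
have /(hQ _ (measurableD mB mC)) QBC : P (B `\` C) = 0%E.
  by apply/fine_measure_eq0; rewrite ?fine_measureD ?BC ?PC ?subrr//; exact: measurableD.
apply: fine_measure_inj => //; apply/eqP.
rewrite eq_sym -subr_eq0 -[X in _ - fine (Q X)]BC.
by rewrite -fine_measureD//; apply/eqP/(fine_measure_eq0 _ (measurableD mB mC)).
Qed.

Lemma measurable_set_ge (g : T -> R) (c : R) : measurable_fun setT g ->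
  measurable [set w | c <= g w].
Proof.
move=> mg; have := mg measurableT _ (measurable_itv `[c, +oo[).
by rewrite setTI preimage_itvcy.
Qed.

Lemma markov_set P (g : T -> R) S (c : R) :
  measurable_fun setT g -> (forall w, 0 <= g w) -> measurable S -> 0 <= c ->
  (forall w, S w -> c <= g w) ->
  ((c * fine (P S))%:E <= \int[P]_(w in setT) (g w)%:E)%E.
Proof.
move=> mg g0 mS c0 cS.
rewrite EFinM fine_measureK// -[S in P S]setIT -integral_indic//.
rewrite -(@integralZl_indic _ _ _ P setT measurableT (fun _ => S) c) //; last first.
  by move=> /lt_le_trans /(_ c0); rewrite ltxx.
apply: ge0_le_integral => //.
- by move=> w _; rewrite lee_fin mulr_ge0.
- by apply/measurable_EFinP; apply: measurable_funM => //; exact: measurable_indic.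
- exact/measurable_EFinP.
move=> w _; rewrite lee_fin indicE; have [/set_mem/cS|_] := boolP (w \in S).
  by rewrite mulr1.
by rewrite mulr0.
Qed.

Lemma atom_integral_small P B (g : T -> R) (c : R) : atom P B ->
  measurable_fun setT g -> (forall w, 0 <= g w) -> 0 < c ->
  (\int[P]_(w in setT) (g w)%:E < (c * fine (P B))%:E)%E ->
  P (B `&` [set w | c <= g w]) = 0%E.
Proof.
move=> aB mg g0 c0 small; have mS := measurable_set_ge c mg.
have [//|full] := atom_setI aB mS.
have := markov_set P mg g0 (measurableI _ _ aB.1 mS) (ltW c0) (fun w => @proj2 _ _).
by rewrite full => /(lt_le_trans small); rewrite ltxx.
Qed.

Lemma atoms_mass_lbound P (I : eqType) (r : seq I) (A : I -> set T) :
  {in r, forall i, atom P (A i)} ->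
  exists2 m, 0 < m & {in r, forall i, m <= fine (P (A i))}.
Proof.
elim: r => [_|i r IH hr]; first by exists 1.
have [m m0 hm] := IH (fun j jr => hr j (@mem_behead _ (i :: r) j jr)).
have [mAi [Apos _]] := hr i (mem_head _ _).
move/(fine_measure_gt0 P mAi) : Apos => Apos.
exists (Num.min m (fine (P (A i)))); first by rewrite lt_min m0.
by move=> j; rewrite inE => /predU1P[->|/hm]; rewrite ge_min ?lexx ?orbT// => ->.
Qed.

Lemma ae_lt_on_atoms P (I : choiceType) (r : seq I) (A : I -> set T) (m : R)
    (g : T -> R) (c : R) :
  {in r, forall i, atom P (A i)} -> {in r, forall i, m <= fine (P (A i))} ->
  measurable_fun setT g -> (forall w, 0 <= g w) -> 0 < c ->
  (\int[P]_(w in setT) (g w)%:E < (c * m)%:E)%E ->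
  {ae P, forall w, (\big[setU/set0]_(i <- r) A i) w -> g w < c}.
Proof.
move=> atoms hm mg g0 c0 small.
apply: (@negligibleS _ _ _ _ (\big[setU/set0]_(i <- r) (A i `&` [set w | c <= g w]))).
  move=> w /= /not_implyP[+ /negP]; rewrite -leNgt => + cg.
  by rewrite -!bigcup_seq => -[i ri Aiw]; exists i.
rewrite big_seq; apply: (big_ind (negligible P)) => //.
- exact: negligible_set0.
- exact: negligibleU.
move=> i ri; apply/negligibleP.
  exact/measurableI/measurable_set_ge/mg/(atoms _ ri).1.
apply: atom_integral_small => //; first exact: atoms.
by apply: (lt_le_trans small); rewrite lee_fin ler_pM2l// hm.
Qed.

End atoms.

Section L0_distances.
Context {d : measure_display} {T : measurableType d} {R : realType}.
Implicit Types (P Q : probability T R) (X Y : T -> R) (B U : set T).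

Lemma measurable_normrB X Y : measurable_fun setT X -> measurable_fun setT Y ->
  measurable_fun setT (fun w => `|X w - Y w|).
Proof.
move=> mX mY; apply: measurableT_comp; first exact: normr_measurable.
exact: measurable_funB.
Qed.

Lemma measurable_min1 (f : T -> R) : measurable_fun setT f ->
  measurable_fun setT (fun w => Num.min 1 (f w)).
Proof. by move=> mf; apply: measurable_minr => //; exact: measurable_cst. Qed.

Lemma measurable_sum_indic (s : seq (set T)) : {in s, forall B, measurable B} ->
  measurable_fun setT (fun w => \sum_(B <- s) \1_B w : R).
Proof.
elim: s => [_|B s IH hs]; first by under eq_fun do rewrite big_nil; exact: measurable_cst.
under eq_fun do rewrite big_cons.
apply: measurable_funD; first exact/measurable_indic/hs/mem_head.
by apply: IH => C Cs; apply: hs; rewrite inE Cs orbT.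
Qed.

Lemma L0plus_cst P (c : R) : 0 <= c -> L0plus P (cst c).
Proof. by move=> c0; split; [exact: measurable_cst|exact: aeW]. Qed.

Lemma L0plus_scaled_indic P B (M : R) : measurable B -> 0 <= M ->
  L0plus P (fun w => M * \1_B w).
Proof.
move=> mB M0; split.
  by apply: measurable_funM; [exact: measurable_cst|exact: measurable_indic].
by apply: aeW => w; rewrite mulr_ge0// indicE.
Qed.

Lemma integral_le_ae P (g : T -> R) (c : R) :
  measurable_fun setT g -> (forall w, 0 <= g w) -> 0 <= c ->
  {ae P, forall w, g w <= c} -> (\int[P]_(w in setT) (g w)%:E <= c%:E)%E.
Proof.
move=> mg g0 c0 gc; rewrite -[c%:E]mule1 -(probability_setT P) -integral_cst//.
apply: ae_ge0_le_integral => //.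
- by move=> w _; rewrite lee_fin.
- exact/measurable_EFinP.
by apply: filterS gc => w h _; rewrite lee_fin.
Qed.

Lemma dist0_le_ae_on P X Y U (c : R) :
  measurable_fun setT X -> measurable_fun setT Y -> measurable U -> 0 <= c ->
  {ae P, forall w, U w -> `|X w - Y w| <= c} ->
  (dist0 P X Y <= (c + fine (P (~` U)))%:E)%E.
Proof.
move=> mX mY mU c0 hU; have mUc := measurableC mU; rewrite /dist0.
apply: (@le_trans _ _ (\int[P]_(w in setT) (c + \1_(~` U) w)%:E)%E).
  apply: ae_ge0_le_integral => //.
  - exact/measurable_EFinP/measurable_min1/measurable_normrB.
  - by move=> w _; rewrite lee_fin addr_ge0// indicE.
  - apply/measurable_EFinP/measurable_funD; first exact: measurable_cst.
    exact: measurable_indic.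
  apply: filterS hU => w h _; rewrite lee_fin indicE.
  have [Uw|nUw] := pselect (U w).
    by rewrite memNset ?addr0 ?ge_min ?h ?orbT.
  by rewrite mem_set// ge_min lerDr c0.
under eq_integral do rewrite EFinD.
rewrite ge0_integralD//; last exact/measurable_EFinP/measurable_indic.
rewrite integral_cst// integral_indic// setIT EFinD fine_measureK//.
by rewrite -[c%:E in leRHS]mule1 -(probability_setT P).
Qed.

Lemma dist0_scaled_indic_le P B (M : R) : measurable B ->
  (dist0 P (cst 0%R) (fun w => M * \1_B w)%R <= (fine (P B))%:E)%E.
Proof.
move=> mB; rewrite fine_measureK// -[B in P B]setIT -integral_indic//.
apply: ge0_le_integral => //.
- apply/measurable_EFinP/measurable_min1/measurable_normrB; first exact: measurable_cst.
  by apply: measurable_funM; [exact: measurable_cst|exact: measurable_indic].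
- exact/measurable_EFinP/measurable_indic.
move=> w _; rewrite lee_fin indicE; case: (w \in B) => /=.
  by rewrite ge_min lexx.
by rewrite mulr0 subr0 normr0 ge_min lexx orbT.
Qed.

Lemma dist1_scaled_indic Q B (M : R) : measurable B -> 0 <= M ->
  dist1 Q (cst 0%R) (fun w => M * \1_B w)%R = (M * fine (Q B))%:E.
Proof.
move=> mB M0; rewrite /dist1.
under eq_integral do rewrite sub0r normrN ger0_norm ?mulr_ge0// ?indicE//.
rewrite (@integralZl_indic _ _ _ Q setT measurableT (fun _ => B) M) //; last first.
  by move=> /lt_le_trans /(_ M0); rewrite ltxx.
by rewrite integral_indic// setIT EFinM fine_measureK.
Qed.

End L0_distances.

Section convexity.
Context {d : measure_display} {T : measurableType d} {R : realType}.

Lemma normrB_convex_le (a b c l s : R) : 0 <= l <= 1 ->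
  `|a - b| <= s -> `|a - c| <= s -> `|a - (l * b + (1 - l) * c)| <= s.
Proof.
move=> /andP[l0 l1] hb hc.
have -> : a - (l * b + (1 - l) * c) = l * (a - b) + (1 - l) * (a - c) by ring.
have l1' : 0 <= 1 - l by rewrite subr_ge0.
apply: le_trans (ler_normD _ _) _; rewrite !normrM (ger0_norm l0) (ger0_norm l1').
apply: le_trans (lerD (ler_wpM2l l0 hb) (ler_wpM2l l1' hc)) _.
by rewrite -mulrDl addrC subrK mul1r.
Qed.

(* Qualified, since [convex_set] alone is the notion of convex.v. *)
Lemma convex_L0plus (P : probability T R) : Defs.convex_set (L0plus P).
Proof.
move=> X Y [mX aX] [mY aY] l l0 l1; split.
  by apply: measurable_funD; apply: measurable_funM => //; exact: measurable_cst.
by apply: filterS2 aX aY => w h1 h2; apply: addr_ge0; apply: mulr_ge0 => //; lra.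
Qed.

Lemma convex_set_avg (C : set (T -> R)) (I : eqType) (r : seq I)
    (F : I -> T -> R) :
  Defs.convex_set C -> r != [::] -> {in r, forall i, C (F i)} ->
  C (fun w => (size r)%:R^-1 * \sum_(i <- r) F i w).
Proof.
move=> cC; elim: r => // i [_ _ hr|j r IH _ hr].
  by under eq_fun do rewrite big_seq1 invr1 mul1r; apply: hr; rewrite mem_head.
have Cr := IH isT (fun k kr => hr k (@mem_behead _ (i :: j :: r) k kr)).
rewrite [size _]/= -[(size r).+2]/((size (j :: r)).+1).
move: Cr; set k := size (j :: r) => Cr.
have k0 : k%:R != 0 :> R by rewrite pnatr_eq0.
have l0 : 0 <= k.+1%:R^-1 :> R by rewrite invr_ge0.
have l1 : k.+1%:R^-1 <= 1 :> R by rewrite invf_le1 ?ler1n.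
have := cC _ _ (hr i (mem_head _ _)) Cr _ l0 l1; congr C; apply: funext => w.
rewrite !big_cons -natr1; field.
by rewrite k0 natr1 pnatr_eq0.
Qed.

End convexity.

Lemma lt_of_min1_lt {R : realType} (x c : R) : Num.min 1 x < Num.min 1 c -> x < c.
Proof.
move=> h; rewrite ltNge; apply/negP => cx.
by move: h; rewrite ltNge le_min !ge_min lexx cx orbT.
Qed.

Section purely_atomic_locally_convex.
Context {d : measure_display} {T : measurableType d} {R : realType}.
Implicit Types (P Q : probability T R) (B C : set T).

Lemma purely_atomic_rich P : purely_atomic P ->
  forall C, measurable C -> C `<=` setT -> (0 < P C)%E ->
    exists2 B, atom P B & B `<=` C /\ (0 < P B)%E.
Proof.
by move=> PA C mC _ /(PA C mC)[B [BC aB]]; exists B => //; split => //; case: aB => _ [].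
Qed.

Lemma purely_atomic_locally_convex P : purely_atomic P -> L0plus_locally_convex P.
Proof.
move=> PA X [mX _] N [NL [e [e0 He]]].
have e2 : 0 < e / 2 by rewrite divr_gt0.
have [s sA hs] := finite_family_exhaustion measurableT (fun B (aB : atom P B) => aB.1)
  (purely_atomic_rich PA) e2.
rewrite fine_probability_setT in hs; set U := \big[setU/set0]_(B <- s) B in hs.
have mU : measurable U by rewrite /U big_seq; apply: bigsetU_measurable => B /sA [].
have [m m0 hm] := @atoms_mass_lbound _ _ _ P _ s id sA.
exists [set Y | L0plus P Y /\ {ae P, forall w, U w -> `|X w - Y w| <= e / 2}].
split; [|split].
- move=> Y1 Y2 [L1 a1] [L2 a2] l l0 l1; split; first exact: convex_L0plus.
  by apply: filterS2 a1 a2 => w h1 h2 Uw; apply: normrB_convex_le; rewrite ?l0 ?l1; auto.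
- move=> Y [LY aY]; apply: He; split => //.
  apply: le_lt_trans (dist0_le_ae_on mX LY.1 mU (ltW e2) aY) _.
  by rewrite lte_fin fine_probabilityC//; lra.
- split; first by move=> Y [].
  exists (Num.min 1 (e / 2) * m); split; first by rewrite mulr_gt0// lt_min ltr01.
  move=> Y [LY hY]; split => //.
  have mg := measurable_min1 (measurable_normrB mX LY.1).
  have g0 w : 0 <= Num.min 1 `|X w - Y w| by rewrite le_min ler01 normr_ge0.
  have c0 : 0 < Num.min 1 (e / 2) by rewrite lt_min ltr01.
  have := @ae_lt_on_atoms _ _ _ P _ s id m _ _ sA hm mg g0 c0 hY.
  by apply: filterS => w h Uw; exact/ltW/lt_of_min1_lt/h.
Qed.

End purely_atomic_locally_convex.

Section atomless.
Context {d : measure_display} {T : measurableType d} {R : realType}.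
Variables (P : probability T R) (A : set T).
Hypothesis atomless : forall B, B `<=` A -> ~ atom P B.
Local Notation p B := (fine (P B)).

Lemma atomless_halve C : measurable C -> C `<=` A -> 0 < p C ->
  exists D, [/\ measurable D, D `<=` C, 0 < p D & p D <= p C / 2].
Proof.
move=> mC CA Cpos.
have [E [mE EC E0 EC']] : exists E, [/\ measurable E, E `<=` C, p E <> 0 & p E <> p C].
  apply: contrapT => hn; apply: (atomless CA); split => //; split.
    exact/fine_measure_gt0.
  move=> E mE EC; apply: contrapT => /not_orP[E0 EC']; apply: hn; exists E; split => //.
    by move/(fine_measure_eq0 P mE).
  by move/(fine_measure_inj mE mC).
have pEC := le_fine_measure P mE mC EC; have pE0 := fine_measure_ge0 P E.
have pCE : p (C `\` E) = p C - p E by rewrite fine_measureD// setIidr.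
have [Esmall|Ebig] := leP (p E) (p C / 2).
  by exists E; split => //; rewrite lt_neqAle eq_sym; apply/andP; split => //; apply/eqP.
exists (C `\` E); split; [exact: measurableD|exact: subDsetl| |]; rewrite pCE.
  by rewrite subr_gt0 lt_neqAle pEC andbT; apply/eqP.
lra.
Qed.

Lemma atomless_small C : measurable C -> C `<=` A -> 0 < p C ->
  forall dl, 0 < dl -> exists D, [/\ measurable D, D `<=` C, 0 < p D & p D < dl].
Proof.
move=> mC CA Cpos dl dl0.
have halves k : exists D, [/\ measurable D, D `<=` C, 0 < p D & p D * 2 ^+ k <= 1].
  elim: k => [|k [D [mD DC Dpos Dk]]].
    by exists C; split => //; rewrite expr0 mulr1 fine_probability_le1.
  have [E [mE ED Epos EDh]] := atomless_halve mD (subset_trans DC CA) Dpos.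
  exists E; split => //; first exact: subset_trans ED DC.
  apply: le_trans Dk; rewrite exprS mulrA ler_wpM2r ?exprn_ge0//; lra.
have [D [mD DC Dpos Dk]] := halves (Num.truncn dl^-1).
exists D; split => //.
have dl2 : dl^-1 < 2 ^+ Num.truncn dl^-1.
  apply: lt_le_trans (truncnS_gt _) _; rewrite -natrX ler_nat; exact: ltn_expl.
have : p D * dl^-1 < 1 by apply: lt_le_trans Dk; rewrite ltr_pM2l.
by rewrite ltr_pdivrMr// mul1r.
Qed.

End atomless.

Section locally_convex_purely_atomic.
Context {d : measure_display} {T : measurableType d} {R : realType}.
Implicit Types (P : probability T R) (s : seq (set T)).

Lemma not_purely_atomic_atomless P : ~ purely_atomic P ->
  exists A, [/\ measurable A, 0 < fine (P A) & forall B, B `<=` A -> ~ atom P B].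
Proof.
move=> nPA; apply: contrapT => hn; apply: nPA => A mA /(fine_measure_gt0 P mA) Apos.
apply: contrapT => hB; apply: hn; exists A; split => // B BA aB.
by apply: hB; exists B.
Qed.

Lemma sum_indic_ge1 s (w : T) :
  (\big[setU/set0]_(B <- s) B) w -> 1 <= \sum_(B <- s) \1_B w :> R.
Proof.
rewrite -bigcup_seq => -[B Bs Bw]; rewrite (big_rem B Bs) indicE mem_set//= lerDl.
by apply: sumr_ge0 => C _; rewrite indicE.
Qed.

Lemma dist0_sum_indic_ge P s : {in s, forall B, measurable B} ->
  ((fine (P (\big[setU/set0]_(B <- s) B)))%:E <=
     dist0 P (cst 0%R) (fun w => \sum_(B <- s) \1_B w)%R)%E.
Proof.
move=> ms; have mU : measurable (\big[setU/set0]_(B <- s) B).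
  by rewrite big_seq; exact: bigsetU_measurable.
have g0 w : 0 <= Num.min 1 `|0 - \sum_(B <- s) \1_B w| :> R.
  by rewrite le_min ler01 normr_ge0.
rewrite -[X in X%:E]mul1r; apply: markov_set g0 mU ler01 _.
  exact/measurable_min1/measurable_normrB/measurable_sum_indic/ms/measurable_cst.
move=> w Uw; rewrite le_min lexx sub0r normrN ger0_norm ?sum_indic_ge1//.
by apply: sumr_ge0 => B _; rewrite indicE.
Qed.

(* [\sum_(B <- s) \1_B] is the average of the [size s * \1_B], which all lie in
   the ball of radius [dl]. *)
Lemma convex_sum_indic P (V : set (T -> R)) s (dl : R) : Defs.convex_set V ->
  [set Y | L0plus P Y /\ (dist0 P (cst 0%R) Y < dl%:E)%E] `<=` V ->
  s != [::] -> {in s, forall B, measurable B /\ fine (P B) < dl} ->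
  V (fun w => \sum_(B <- s) \1_B w).
Proof.
move=> cV hV s0 hs; have := convex_set_avg (F := fun B w => (size s)%:R * \1_B w) cV s0.
have n0 : (size s)%:R != 0 :> R by rewrite pnatr_eq0 size_eq0.
rewrite (_ : (fun w => _) = fun w => \sum_(B <- s) \1_B w); last first.
  by apply: funext => w; rewrite -mulr_sumr mulKf.
apply => B /hs[mB Bdl]; apply: hV; split; first exact: L0plus_scaled_indic.
by apply: le_lt_trans (dist0_scaled_indic_le _ _ mB) _; rewrite lte_fin.
Qed.

Lemma locally_convex_purely_atomic P : L0plus_locally_convex P -> purely_atomic P.
Proof.
move=> LC; apply: contrapT => /not_purely_atomic_atomless[A [mA Apos atomless]].
have [a Aa a2] : exists2 a, fine (P A) = a & 0 < a / 2 by exists (fine (P A)); lra.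
have [V [cV [VN [_ [dl [dl0 hV]]]]]] := LC _ (L0plus_cst P (lexx 0))
  [set Y | L0plus P Y /\ (dist0 P (cst 0%R) Y < (a / 2)%:E)%E]
  (conj (fun Y => @proj1 _ _) (ex_intro _ (a / 2) (conj a2 (fun Y h => h)))).
pose G := [set B | [/\ measurable B, B `<=` A & fine (P B) < dl]].
have Grich C : measurable C -> C `<=` A -> (0 < P C)%E ->
    exists2 B, G B & B `<=` C /\ (0 < P B)%E.
  move=> mC CA /(fine_measure_gt0 P mC) Cpos.
  have [D [mD DC Dpos Ddl]] := atomless_small atomless mC CA Cpos dl0.
  exists D; first by split => //; exact: subset_trans DC CA.
  by split => //; exact/fine_measure_gt0.
have GM : G `<=` measurable by move=> B [].
have [s sG hs] := finite_family_exhaustion mA GM Grich a2.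
rewrite Aa in hs; set U := \big[setU/set0]_(B <- s) B in hs.
have s0 : s != [::].
  by apply: contraTneq hs => s0; rewrite /U s0 big_nil measure0/= -leNgt; lra.
have sM : {in s, forall B, measurable B /\ fine (P B) < dl} by move=> B /sG[].
have /VN[_ hd] := convex_sum_indic cV hV s0 sM.
have := le_lt_trans (dist0_sum_indic_ge P (fun B Bs => (sM B Bs).1)) hd.
by rewrite lte_fin; lra.
Qed.

End locally_convex_purely_atomic.

Section finitely_many_atoms.
Context {d : measure_display} {T : measurableType d} {R : realType}.
Implicit Types (P Q : probability T R) (B C : set T).

Lemma finitely_many_atoms_conull P n (A : 'I_n -> set T) : purely_atomic P ->
  (forall i, atom P (A i)) ->
  (forall B, atom P B -> exists i, P ((B `\` A i) `|` (A i `\` B)) = 0%E) ->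
  P (~` \big[setU/set0]_(i < n) A i) = 0%E.
Proof.
move=> PA aA hA; set U := \big[setU/set0]_(i < n) A i.
have mU : measurable U by apply: bigsetU_measurable => i _; exact: (aA i).1.
apply: contrapT => /eqP U0.
have Upos : (0 < P (~` U))%E by rewrite lt0e U0 measure_ge0.
have [B [BU aB]] := PA _ (measurableC mU) Upos.
have [i hi] := hA B aB.
have [mAi [Apos _]] := aA i.
have mD : measurable ((B `\` A i) `|` (A i `\` B)).
  by apply: measurableU; apply: measurableD => //; exact: aB.1.
have AiU : A i `<=` U.
  by move=> w Aiw; rewrite /U -bigcup_seq; exists i; rewrite /= ?mem_index_enum.
have AiD : A i `<=` (B `\` A i) `|` (A i `\` B).
  by move=> w Aiw; right; split => // /BU; apply; exact: AiU.
have := le_fine_measure P mAi mD AiD; move/(fine_measure_eq0 P mD) : hi => ->.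
by move/(fine_measure_gt0 P mAi) : Apos; lra.
Qed.

Lemma ae_lt_of_conull_atoms (mu nu : probability T R) n (A : 'I_n -> set T)
    (m : R) (g : T -> R) (c : R) :
  (forall i, atom mu (A i)) -> mu (~` \big[setU/set0]_(i < n) A i) = 0%E ->
  equiv_prob nu mu -> (forall i, m <= fine (mu (A i))) ->
  measurable_fun setT g -> (forall w, 0 <= g w) -> 0 < c ->
  (\int[mu]_(w in setT) (g w)%:E < (c * m)%:E)%E -> {ae nu, forall w, g w < c}.
Proof.
move=> aA U0 hnu hm mg g0 c0 small; apply: (equiv_prob_ae hnu).
have mU : measurable (\big[setU/set0]_(i < n) A i).
  by apply: bigsetU_measurable => i _; exact: (aA i).1.
have aeU : {ae mu, forall w, (\big[setU/set0]_(i < n) A i) w}.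
  by exists (~` \big[setU/set0]_(i < n) A i); split => //; exact: measurableC.
have := @ae_lt_on_atoms _ _ _ mu _ (index_enum 'I_n) A m g c (fun i _ => aA i)
  (fun i _ => hm i) mg g0 c0 small.
by apply: filterS2 aeU => w Uw; apply.
Qed.

Lemma finitely_many_atoms_same_topology P Q : purely_atomic P ->
  finitely_many_atoms P -> equiv_prob Q P -> same_topology_L0plus P Q.
Proof.
move=> PA [n [A [aA hA]]] hQ X [mX _] N.
have PU := finitely_many_atoms_conull PA aA hA.
have QU : Q (~` \big[setU/set0]_(i < n) A i) = 0%E.
  by apply/hQ => //; apply/measurableC/bigsetU_measurable => i _; exact: (aA i).1.
have aQ i := equiv_prob_atom hQ (aA i).
have [mP mP0 hmP] := @atoms_mass_lbound _ _ _ P _ (index_enum 'I_n) A (fun i _ => aA i).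
have [mQ mQ0 hmQ] := @atoms_mass_lbound _ _ _ Q _ (index_enum 'I_n) A (fun i _ => aQ i).
have lb (mu : probability T R) (m : R) :
    {in index_enum 'I_n, forall i, m <= fine (mu (A i))} ->
    forall i, m <= fine (mu (A i)).
  by move=> h i; apply: h; rewrite mem_index_enum.
split => -[NL [e [e0 He]]]; split => //; have e2 : 0 < e / 2 by rewrite divr_gt0.
- exists (e / 2 * mQ); split; first by rewrite mulr_gt0.
  move=> Y [LY hY]; apply: He; split => //.
  have mg := measurable_normrB mX LY.1.
  have := ae_lt_of_conull_atoms aQ QU (equiv_prob_sym hQ) (lb _ _ hmQ) mg
    (fun w => normr_ge0 _) e2 hY.
  move=> hae; apply: le_lt_trans (integral_le_ae (measurable_min1 mg) _ (ltW e2) _) _.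
  + by move=> w; rewrite le_min ler01 normr_ge0.
  + by apply: filterS hae => w /ltW hw; rewrite ge_min hw orbT.
  + by rewrite lte_fin; lra.
- exists (Num.min 1 (e / 2) * mP); split; first by rewrite mulr_gt0// lt_min ltr01.
  move=> Y [LY hY]; apply: He; split => //.
  have mg := measurable_normrB mX LY.1.
  have g0 w : 0 <= Num.min 1 `|X w - Y w| by rewrite le_min ler01 normr_ge0.
  have c0 : 0 < Num.min 1 (e / 2) by rewrite lt_min ltr01.
  have := ae_lt_of_conull_atoms aA PU hQ (lb _ _ hmP) (measurable_min1 mg) g0 c0 hY.
  move=> hae; apply: le_lt_trans (integral_le_ae mg (fun w => normr_ge0 _) (ltW e2) _) _.
  + by apply: filterS hae => w /lt_of_min1_lt/ltW.
  + by rewrite lte_fin; lra.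
Qed.

End finitely_many_atoms.

Section equivalent_topologies.
Context {d : measure_display} {T : measurableType d} {R : realType}.
Implicit Types (P Q : probability T R) (B C : set T).

Lemma atom_setI_bigsetU_eq0 P (s : seq (set T)) B : atom P B ->
  {in s, forall C, atom P C} ->
  (forall C, C \in s -> P ((B `\` C) `|` (C `\` B)) <> 0%E) ->
  P (B `&` \big[setU/set0]_(C <- s) C) = 0%E.
Proof.
move=> aB sA hs; have mB := aB.1.
have ms : {in s, forall C, measurable C} by move=> C /sA[].
apply/negligibleP.
  by apply: measurableI => //; rewrite big_seq; exact: bigsetU_measurable.
apply: (@negligibleS _ _ _ _ (\big[setU/set0]_(C <- s) (B `&` C))).
  by move=> w [Bw]; rewrite -!bigcup_seq => -[C Cs Cw]; exists C.
rewrite big_seq; apply: (big_ind (negligible P)) => //.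
- exact: negligible_set0.
- exact: negligibleU.
move=> C Cs; apply/negligibleP; first exact/measurableI/ms.
by have [//|/(hs C Cs)] := atom_setI_or_symdiff aB (sA C Cs).
Qed.

Lemma same_topology_finitely_many_atoms P Q : purely_atomic P ->
  equiv_prob Q P -> same_topology_L0plus P Q -> finitely_many_atoms P.
Proof.
move=> PA hQ hsame.
have [_ [dl [dl0 hdl]]] := (hsame _ (L0plus_cst P (lexx 0))
  [set Y | L0plus P Y /\ (dist1 Q (cst 0%R) Y < 1%:E)%E]).2
  (conj (fun Y => @proj1 _ _) (ex_intro _ 1 (conj ltr01 (fun Y h => h)))).
have [s sA hs] := finite_family_exhaustion measurableT
  (fun B (aB : atom P B) => aB.1) (purely_atomic_rich PA) dl0.
rewrite fine_probability_setT in hs; set U := \big[setU/set0]_(B <- s) B in hs.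
have mU : measurable U by rewrite /U big_seq; apply: bigsetU_measurable => B /sA [].
exists (size s), (fun i => nth set0 s i); split.
  by move=> i; apply: sA; exact: mem_nth.
move=> B aB; have mB := aB.1.
suff [C Cs BC] : exists2 C, C \in s & P ((B `\` C) `|` (C `\` B)) = 0%E.
  have Ci : (index C s < size s)%N by rewrite index_mem.
  by exists (Ordinal Ci); rewrite /= nth_index.
apply: contrapT => hno.
have /(fine_measure_eq0 P (measurableI _ _ mB mU)) BU : P (B `&` U) = 0%E.
  by apply: atom_setI_bigsetU_eq0 => // C Cs BC; apply: hno; exists C.
have Bdl : fine (P B) < dl.
  have := fine_measureD P mB mU; rewrite BU subr0 => <-.
  have := le_fine_measure P (measurableD mB mU) (measurableC mU) (@subDsetr _ _ _).
  by rewrite fine_probabilityC//; lra.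
have /(fine_measure_gt0 Q mB) QB : (0 < Q B)%E by case: (equiv_prob_atom hQ aB) => _ [].
have /hdl[_] : [set Y | L0plus P Y /\ (dist0 P (cst 0%R) Y < dl%:E)%E]
    (fun w => (fine (Q B))^-1 * \1_B w).
  split; first by apply: L0plus_scaled_indic; rewrite // invr_ge0 ltW.
  by apply: le_lt_trans (dist0_scaled_indic_le _ _ mB) _; rewrite lte_fin.
by rewrite dist1_scaled_indic ?invr_ge0 ?ltW// mulVf ?gt_eqF// ltxx.
Qed.

End equivalent_topologies.

Theorem proposition3p3 (d : measure_display) (T : measurableType d)
  (R : realType) (P : probability T R) :
  (L0plus_locally_convex P <-> purely_atomic P) /\
  (purely_atomic P ->
     ((exists Q : probability T R, equiv_prob Q P /\ same_topology_L0plus P Q)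
        <-> finitely_many_atoms P) /\
     (finitely_many_atoms P ->
        forall Q : probability T R, equiv_prob Q P -> same_topology_L0plus P Q)).
Proof.
split; first split.
- exact: locally_convex_purely_atomic.
- exact: purely_atomic_locally_convex.
move=> PA; split; last by move=> fin Q; exact: finitely_many_atoms_same_topology.
split; first by case=> Q [hQ hsame]; exact: same_topology_finitely_many_atoms hsame.
by move=> fin; exists P; split; [|exact: finitely_many_atoms_same_topology].
Qed.
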